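(* Let $M$ be a score distribution model in which a route can only distribute non-negative scores, i.e. $w_M(j,k)\ge 0$ for all $j,k$. Then for every road segment $s$ we have $s.\mathit{lb} \le s.\mathit{min}$ and $s.\mathit{ub} \ge s.\mathit{max}$, where $s.\mathit{min}=\min_{p\in s}\mathit{score}_M(p)$ and $s.\mathit{max}=\max_{p\in s}\mathit{score}_M(p)$.
   Context: A road network is a directed graph $G=(V,E)$ embedded in the plane: each vertex $v$ has a location $\mathit{loc}(v)\in\mathbb{R}^2$, and each edge $e=(v_i,v_j)$ has length $\|e\|$ equal to the Euclidean distance between $\mathit{loc}(v_i)$ and $\mathit{loc}(v_j)$. A network point is a pair $p=(\mathit{eid},d)$ where $\mathit{eid}$ identifies an edge $e=(v_i,v_j)$ and $d\in[0,1]$ is the ratio of the distance from $v_i$ to the point to $\|e\|$; $P$ denotes the set of all network points (so $V\subseteq P$). A road segment is a sequence $s=\langle p_1,\dots,p_n\rangle$, $n\ge 2$, with $p_1,p_n\in P$, $p_2,\dots,p_{n-1}\in V$, $p_1,p_2$ on the same edge, $p_{n-1},p_n$ on the same edge, and $(p_i,p_{i+1})\in E$ for $1<i<n-1$; a segment is identified with the set of network points it passes through. A facility $f$ is located at a network point $f.p$; $F$ is the set of facilities. A route usage object is $\mathit{ro}=(\mathit{rid},r,\mathit{count},\langle \mathit{usage}_1,\dots,\mathit{usage}_{\mathit{count}}\rangle)$ whose route $r$ is a road segment; $R$ is the set of route usage objects. A route $r$ covers a segment $s'$ if every point of $s'$ lies on $r$, and intersects $s'$ if some point of $s'$ lies on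 $r$. $s'.C$ (resp. $s'.I$) is the set of route usage objects whose routes cover (resp. intersect) $s'$; $s'.C\subseteq s'.I$. For a fixed threshold $\delta>0$, a facility $f$ attracts a route $r$ if the shortest network distance from $f.p$ to $r$ is at most $\delta$. Each route $r$ is assigned a score $\mathit{score}(r)\ge 0$ (e.g. $\mathit{score}(r)=\mathrm{length}(r)\sum_i \mathit{usage}_i$). A score distribution model $M$ distributes $\mathit{score}(r)$ over the subsegments of $r$: the facilities attracting $r$ partition $r$ into $k$ consecutive subsegments, and the $j$-th subsegment ($1\le j\le k$) receives $w_M(j,k)\cdot\mathit{score}(r)$. The score $\mathit{score}_M(p)$ of a network point $p$ is the sum, over all route usage objects whose route contains $p$, of the amount assigned by $M$ to the subsegment of that route containing $p$. For a segment $s$ and a route $r_i$ intersecting $s$, let $w_M(j_i,k_i)$ be the fraction of $\mathit{score}(r_i)$ assigned by $M$ to the $j_i$-th subsegment of $r_i$ (out of $k_i$) in which $s$ lies. The lower and upper bound scores of $s$ are $s.\mathit{lb}=\sum_{r_i\in s.C} w_M(j_i,k_i)\,\mathit{score}(r_i)$ and $s.\mathit{ub}=\sum_{r_i\in s.I} w_M(j_i,k_i)\,\mathit{score}(r_i)$; when facilities lie on $s$ so that $s$ meets several subsegments of a route, the lower bound uses the smallest and the upper bound the largest of the corresponding assigned values. *)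

From mathcomp Require Import all_boot all_order all_algebra.
From mathcomp Require Import all_classical all_reals.
Set Implicit Arguments. Unset Strict Implicit. Unset Printing Implicit Defensive.
Import Order.TTheory GRing.Theory Num.Theory.
Local Open Scope classical_set_scope.
Local Open Scope ring_scope.

(* Abstract rendering of the setting:
   - [P] is the type of network points of the road network;
   - a road segment (in particular a route) is identified with the set of
     network points it passes through, i.e. a [set P];
   - a route usage object carries its route, its score [score(r)], the number
     [k] of consecutive subsegments into which the facilities attracting the
     route partition it, and, for every point of the route, the index
     [j] (1 <= j <= k) of the subsegment containing that point. *)
Record route_usage (R : realType) (P : Type) := RouteUsage {
  ro_route : set P;
  ro_score : R;
  ro_k : nat;
  ro_sub : P -> nat
}.

Definition wf_route_usage (R : realType) (P : Type) (ro : route_usage R P) :=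
  [/\ 0 <= ro_score ro, (0 < ro_k ro)%N &
      forall p, ro_route ro p -> (1 <= ro_sub ro p <= ro_k ro)%N].

Definition covers (R : realType) (P : Type) (ro : route_usage R P) (s : set P) :=
  s `<=` ro_route ro.
Definition intersects (R : realType) (P : Type) (ro : route_usage R P) (s : set P) :=
  exists p, s p /\ ro_route ro p.

Definition assigned (R : realType) (P : Type) (w : nat -> nat -> R)
  (ro : route_usage R P) (p : P) : R :=
  w (ro_sub ro p) (ro_k ro) * ro_score ro.

Definition point_score (R : realType) (P : Type) (w : nat -> nat -> R)
  (Rs : seq (route_usage R P)) (p : P) : R :=
  \sum_(ro <- Rs | `[< ro_route ro p >]) assigned w ro p.

Definition seg_values (R : realType) (P : Type) (w : nat -> nat -> R)
  (ro : route_usage R P) (s : set P) : set R :=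
  [set assigned w ro p | p in s `&` ro_route ro].

(* s.lb and s.ub (smallest / largest assigned value among the subsegments
   of the route met by s; this is a finite set) *)
Definition seg_lb (R : realType) (P : Type) (w : nat -> nat -> R)
  (Rs : seq (route_usage R P)) (s : set P) : R :=
  \sum_(ro <- Rs | `[< covers ro s >]) inf (seg_values w ro s).
Definition seg_ub (R : realType) (P : Type) (w : nat -> nat -> R)
  (Rs : seq (route_usage R P)) (s : set P) : R :=
  \sum_(ro <- Rs | `[< intersects ro s >]) sup (seg_values w ro s).

(* s.min and s.max: min / max of score_M(p) over p in s (the set of values
   is finite, so these are the inf / sup of that set) *)
Definition seg_min (R : realType) (P : Type) (w : nat -> nat -> R)
  (Rs : seq (route_usage R P)) (s : set P) : R :=
  inf [set point_score w Rs p | p in s].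
Definition seg_max (R : realType) (P : Type) (w : nat -> nat -> R)
  (Rs : seq (route_usage R P)) (s : set P) : R :=
  sup [set point_score w Rs p | p in s].

From mathcomp Require Import all_boot all_order all_algebra.
From mathcomp Require Import all_classical all_reals.
From Stdlib Require List.
Import Order.TTheory GRing.Theory Num.Theory.
Local Open Scope classical_set_scope.
Local Open Scope ring_scope.

(* Both inequalities are compared route by route at a point [p] of [s]: a
   route covering [s] contributes to [score_M(p)] a value at least the least
   value it assigns on [s], and a route through [p] contributes at most the
   largest value it assigns on [s]; routes that intersect [s] but miss [p]
   contribute nothing to [score_M(p)] but a nonnegative amount to [s.ub]. *)

Lemma ler_sum_In (R : numDomainType) (T : Type) (r : seq T) (F G : T -> R) :
  (forall x, List.In x r -> F x <= G x) ->
  \sum_(x <- r) F x <= \sum_(x <- r) G x.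
Proof.
elim: r => [|x r IHr] FG; first by rewrite !big_nil.
rewrite !big_cons lerD ?FG //=; first by left.
by apply: IHr => y ry; apply: FG; right.
Qed.

Section SegmentBounds.

Variables (R : realType) (P : Type) (w : nat -> nat -> R).
Hypothesis w_ge0 : forall j k, 0 <= w j k.

Variable ro : route_usage R P.
Hypothesis ro_wf : wf_route_usage ro.

Lemma assigned_ge0 p : 0 <= assigned w ro p.
Proof. by case: ro_wf => score_ge0 _ _; apply: mulr_ge0. Qed.

Lemma seg_values_lbound s : lbound (seg_values w ro s) 0.
Proof. by move=> _ [p _ <-]; apply: assigned_ge0. Qed.

(* The values come from the finitely many subsegments [1 <= j <= k]. *)
Lemma seg_values_has_ubound s : has_ubound (seg_values w ro s).
Proof.
case: ro_wf => score_ge0 _ sub_range.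
exists (\sum_(j < (ro_k ro).+1) w j (ro_k ro) * ro_score ro).
move=> _ [p [_ /sub_range/andP[_ sub_le_k]] <-].
rewrite -ltnS in sub_le_k.
rewrite /assigned (bigD1 (Ordinal sub_le_k)) //= lerDl.
by apply: sumr_ge0 => j _; apply: mulr_ge0.
Qed.

Lemma inf_seg_values_le s p :
  s p -> ro_route ro p -> inf (seg_values w ro s) <= assigned w ro p.
Proof.
move=> sp rp; apply: ge_inf; first by exists 0; apply: seg_values_lbound.
by exists p.
Qed.

Lemma sup_seg_values_ge s p :
  s p -> ro_route ro p -> assigned w ro p <= sup (seg_values w ro s).
Proof.
move=> sp rp; apply: sup_upper_bound; last by exists p.
by split; [exists (assigned w ro p); exists p | apply: seg_values_has_ubound].
Qed.

Lemma sup_seg_values_ge0 s : intersects ro s -> 0 <= sup (seg_values w ro s).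
Proof.
case=> p [sp rp]; exact: le_trans (assigned_ge0 p) (sup_seg_values_ge _ _ sp rp).
Qed.

End SegmentBounds.

Section PointScoreBounds.

Variables (R : realType) (P : Type) (w : nat -> nat -> R).
Variables (Rs : seq (route_usage R P)) (s : set P).
Hypothesis w_ge0 : forall j k, 0 <= w j k.
Hypothesis Rs_wf : forall ro, List.In ro Rs -> wf_route_usage ro.

Lemma seg_lb_le_point_score p : s p -> seg_lb w Rs s <= point_score w Rs p.
Proof.
move=> sp; rewrite /seg_lb /point_score big_mkcond [leRHS]big_mkcond.
apply: ler_sum_In => ro /Rs_wf ro_wf.
case: asboolP => [ro_cov | _].
  have rp : ro_route ro p by apply: ro_cov.
  by rewrite asboolT //; apply: inf_seg_values_le.
by case: ifP => // _; apply: assigned_ge0.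
Qed.

Lemma point_score_le_seg_ub p : s p -> point_score w Rs p <= seg_ub w Rs s.
Proof.
move=> sp; rewrite /seg_ub /point_score big_mkcond [leRHS]big_mkcond.
apply: ler_sum_In => ro /Rs_wf ro_wf.
case: asboolP => [rp | _].
  have ro_int : intersects ro s by exists p.
  by rewrite asboolT //; apply: sup_seg_values_ge.
by case: asboolP => // ro_int; apply: sup_seg_values_ge0.
Qed.

End PointScoreBounds.

Theorem lemma2 (R : realType) (P : Type) (w : nat -> nat -> R)
  (Rs : seq (route_usage R P)) (s : set P) :
  (forall j k, 0 <= w j k) ->
  (forall ro, List.In ro Rs -> wf_route_usage ro) ->
  s !=set0 ->
  seg_lb w Rs s <= seg_min w Rs s /\ seg_max w Rs s <= seg_ub w Rs s.
Proof.
move=> w_ge0 Rs_wf [p0 sp0].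
have scores_neq0 : [set point_score w Rs p | p in s] !=set0.
  by exists (point_score w Rs p0), p0.
split.
- apply: lb_le_inf => // _ [p sp <-].
  exact: seg_lb_le_point_score.
- apply: ge_sup => // _ [p sp <-].
  exact: point_score_le_seg_ub.
Qed.
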